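(* Fix $\gamma\in\mathbb{R}$ and let $\theta^1,\theta^2\in[0,\infty)^{s_0}$ be such that $\Gamma_{\theta^1}^+\cap\Gamma_{\theta^2}^-=\emptyset$ or $\Gamma_{\theta^1}^-\cap\Gamma_{\theta^2}^+=\emptyset$, and let $c_1,c_2>0$. (i) If Condition 3.2 holds at $\gamma$ for $\theta^1$ and for $\theta^2$, then it holds at $\gamma$ for $c_1\theta^1+c_2\theta^2$. (ii) If the balance equation (B) holds for $\theta^1$ and for $\theta^2$, then (B) holds for $c_1\theta^1+c_2\theta^2$.
   Context: Fix integers $s_0,r_0\ge 1$ and, for $k=1,\dots,r_0$, vectors $\nu_k,\nu_k'\in\mathbb{N}^{s_0}$ (reactant and product vectors of reaction $k$); set $\zeta_k=\nu_k'-\nu_k$. Fix $\alpha\in[0,\infty)^{s_0}$ and $\beta\in\mathbb{R}^{r_0}$ and set $\rho_k=\beta_k+\nu_k\cdot\alpha$. For $\theta\in[0,\infty)^{s_0}$ let $\Gamma_\theta^+=\{k:\theta\cdot\zeta_k>0\}$, $\Gamma_\theta^-=\{k:\theta\cdot\zeta_k<0\}$ and $\mathrm{supp}(\theta)=\{i:\theta_i>0\}$. A maximum over the empty set is $-\infty$. For $\theta\in[0,\infty)^{s_0}$ and $\gamma\in\mathbb{R}$: the balance equation for $\theta$ is (B) $\max_{k\in\Gamma_\theta^-}\rho_k=\max_{k\in\Gamma_\theta^+}\rho_k$; the time-scale constraint for $\theta$ at $\gamma$ is (T) $\gamma\le\max_{i:\theta_i>0}\alpha_i-\max_{k\in\Gamma_\theta^+\cup\Gamma_\theta^-}\rho_k$;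 Condition 3.2 holds for $\theta$ at $\gamma$ if (B) or (T) holds. *)

(* the statement is purely order-theoretic over the reals,
   stated for an arbitrary real field R. *)
From HB Require Import structures.
From mathcomp Require Import all_boot all_order all_algebra.
Set Implicit Arguments. Unset Strict Implicit. Unset Printing Implicit Defensive.
Import Order.TTheory GRing.Theory Num.Theory.
Local Open Scope ring_scope.

Section CRN.
Variables (R : realFieldType) (s0 r0 : nat).
(* reactant / product vectors nu_k, nu'_k in N^{s0} *)
Variables (nu nu' : 'I_r0 -> 'I_s0 -> nat).
Variables (alpha : 'I_s0 -> R) (beta : 'I_r0 -> R).

Definition zeta (k : 'I_r0) (i : 'I_s0) : R := (nu' k i)%:R - (nu k i)%:R.
Definition rho (k : 'I_r0) : R := beta k + \sum_(i < s0) (nu k i)%:R * alpha i.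
Definition tz (theta : 'I_s0 -> R) (k : 'I_r0) : R :=
  \sum_(i < s0) theta i * zeta k i.

Definition Gplus (theta : 'I_s0 -> R) : {set 'I_r0} := [set k | 0 < tz theta k].
Definition Gminus (theta : 'I_s0 -> R) : {set 'I_r0} := [set k | tz theta k < 0].
Definition supp (theta : 'I_s0 -> R) : {set 'I_s0} := [set i | 0 < theta i].

End CRN.

(* Extended reals R ∪ {-oo}: None stands for -oo. *)
Definition emax (R : realFieldType) (x y : option R) : option R :=
  match x, y with
  | None, _ => y
  | _, None => x
  | Some a, Some b => Some (Num.max a b)
  end.

(* maximum of f over a finite set A; max over the empty set is -oo (None) *)
Definition setmax (R : realFieldType) (T : finType) (A : {set T}) (f : T -> R)
  : option R := \big[@emax R/None]_(t in A) Some (f t).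

Section Conds.
Variables (R : realFieldType) (s0 r0 : nat).
Variables (nu nu' : 'I_r0 -> 'I_s0 -> nat).
Variables (alpha : 'I_s0 -> R) (beta : 'I_r0 -> R).

Definition balance (theta : 'I_s0 -> R) : Prop :=
  setmax (Gminus nu nu' theta) (rho nu alpha beta)
  = setmax (Gplus nu nu' theta) (rho nu alpha beta).

(* (T) time-scale constraint:
   gamma <= max_{i in supp theta} alpha_i - max_{k in Gamma+ ∪ Gamma-} rho_k,
   with extended arithmetic: a - (-oo) = +oo, -oo - m = -oo for finite m,
   and the degenerate -oo - (-oo) read as +oo. *)
Definition timescale (theta : 'I_s0 -> R) (gamma : R) : Prop :=
  match setmax (supp theta) alpha,
        setmax (Gplus nu nu' theta :|: Gminus nu nu' theta) (rho nu alpha beta) with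
  | _, None => True
  | None, Some _ => False
  | Some a, Some m => gamma <= a - m
  end.

Definition cond32 (theta : 'I_s0 -> R) (gamma : R) : Prop :=
  balance theta \/ timescale theta gamma.

End Conds.

(* Write P, N for Gamma^+, Gamma^- and m for the largest rate over P :|: N.  A
   reaction lies in P of theta = c1 theta1 + c2 theta2 only if it lies in P of theta1
   or of theta2, and it does if it is positive for one summand and not negative for
   the other (dually for N).  So m(theta) <= max (m(theta1), m(theta2)), and since
   supp theta contains both supports, (T) passes to theta from the summand with the
   larger m.  If m(theta1) > m(theta2) strictly, a maximiser for (B) of theta1 is not
   cancelled by theta2, so both maxima for theta equal m(theta1) and (B) passes to
   theta.  If (B) holds for both summands, disjointness of P1 and N2 puts P1 inside
   P; a reaction of P2 cancelled by N1 has rate at most max N1 = max P1, so max P is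
   the larger of max P1 and max P2, dually max N is the larger of max N1 and max N2,
   and these agree by (B). *)
From HB Require Import structures.
From mathcomp Require Import all_boot all_order all_algebra.
Set Implicit Arguments. Unset Strict Implicit. Unset Printing Implicit Defensive.
Import Order.TTheory GRing.Theory Num.Theory.
Local Open Scope ring_scope.

Section ExtendedMax.
Variable R : realFieldType.

Definition ole (x y : option R) : bool :=
  match x, y with
  | None, _ => true
  | Some _, None => false
  | Some a, Some b => a <= b
  end.

Lemma ole_refl x : ole x x.
Proof. by case: x => [a|] /=. Qed.

Lemma ole_trans y x z : ole x y -> ole y z -> ole x z.
Proof. by case: x => [a|]; case: y => [b|]; case: z => [c|] //=; apply: le_trans. Qed.

Lemma ole_anti x y : ole x y && ole y x -> x = y.
Proof. by case: x => [a|]; case: y => [b|] //= /le_anti ->. Qed.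

Lemma ole_total x y : ole x y || ole y x.
Proof. by case: x => [a|]; case: y => [b|] //=; apply: le_total. Qed.

Lemma ole_emax x y z : ole (emax x y) z = ole x z && ole y z.
Proof. by case: x => [a|]; case: y => [b|]; case: z => [c|] //=; rewrite ?andbT // ge_max. Qed.

Lemma ole_emaxl x y : ole x (emax x y).
Proof. by move: (ole_refl (emax x y)); rewrite ole_emax => /andP[]. Qed.

Lemma ole_emaxr x y : ole y (emax x y).
Proof. by move: (ole_refl (emax x y)); rewrite ole_emax => /andP[]. Qed.

Lemma ole_gtW x y : ~~ ole x y -> ole y x.
Proof. by have := ole_total x y; case: (ole x y). Qed.

Lemma emaxxx (x : option R) : emax x x = x.
Proof. by case: x => [a|] //=; rewrite maxxx. Qed.

Lemma emaxA : associative (@emax R).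
Proof. by move=> [a|] [b|] [c|] //=; rewrite maxA. Qed.

Lemma emaxC : commutative (@emax R).
Proof. by move=> [a|] [b|] //=; rewrite maxC. Qed.

Lemma emaxNx : left_id None (@emax R).
Proof. by []. Qed.

HB.instance Definition _ := Monoid.isComLaw.Build (option R) None (@emax R) emaxA emaxC emaxNx.

Variables (T : finType) (f : T -> R).

Lemma le_setmax (A : {set T}) k : k \in A -> ole (Some (f k)) (setmax A f).
Proof. by move=> kA; rewrite /setmax (bigD1 k) //; apply: ole_emaxl. Qed.

Lemma setmax_leP (A : {set T}) x :
  reflect (forall k, k \in A -> ole (Some (f k)) x) (ole (setmax A f) x).
Proof.
apply: (iffP idP) => [le_Ax k kA | le_fx]; first exact: ole_trans (le_setmax kA) le_Ax.
by apply: (big_rec (fun y => ole y x)) => // k y kA le_yx; rewrite ole_emax le_fx.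
Qed.

Lemma setmax_attained (A : {set T}) m :
  setmax A f = Some m -> exists2 k, k \in A & f k = m.
Proof.
apply: (big_rec (fun y => y = Some m -> exists2 k, k \in A & f k = m)) => // k y kA IHy.
case: y IHy => [b|] IHy /=; last by case=> <-; exists k.
by rewrite maxEle; case: ifP => _ eq_m; [exact: IHy | case: eq_m => <-; exists k].
Qed.

Lemma setmax_subset (A B : {set T}) : A \subset B -> ole (setmax A f) (setmax B f).
Proof. by move/subsetP=> sAB; apply/setmax_leP => k /sAB; apply: le_setmax. Qed.

Lemma setmaxU (A B : {set T}) : setmax (A :|: B) f = emax (setmax A f) (setmax B f).
Proof.
apply: ole_anti; rewrite ole_emax !setmax_subset ?subsetUl ?subsetUr // !andbT.
apply/setmax_leP => k; rewrite inE => /orP[kA|kB].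
  exact: ole_trans (le_setmax kA) (ole_emaxl _ _).
exact: ole_trans (le_setmax kB) (ole_emaxr _ _).
Qed.

End ExtendedMax.

Section CombinedSigns.
Variables (R : realFieldType) (T : finType) (f : T -> R).

(* (P, N) plays the positive/negative reaction sets of a positive combination of two
   vectors whose positive/negative sets are (P1, N1) and (P2, N2). *)
Definition combined_signs (P1 N1 P2 N2 P N : {set T}) : Prop :=
  [/\ P \subset P1 :|: P2, N \subset N1 :|: N2,
      (P1 :\: N2) :|: (P2 :\: N1) \subset P & (N1 :\: P2) :|: (N2 :\: P1) \subset N].

Lemma combined_signsC P1 N1 P2 N2 P N :
  combined_signs P1 N1 P2 N2 P N -> combined_signs P2 N2 P1 N1 P N.
Proof. by case=> *; split; rewrite setUC. Qed.

Lemma combined_signsN P1 N1 P2 N2 P N :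
  combined_signs P1 N1 P2 N2 P N -> combined_signs N1 P1 N2 P2 N P.
Proof. by case. Qed.

Variables (P1 N1 P2 N2 P N : {set T}).
Hypothesis hs : combined_signs P1 N1 P2 N2 P N.

Lemma setmax_combined_le :
  ole (setmax (P :|: N) f) (emax (setmax (P1 :|: N1) f) (setmax (P2 :|: N2) f)).
Proof.
rewrite -setmaxU; apply: setmax_subset; case: hs => sP sN _ _.
rewrite setUACA subUset; apply/andP; split; first exact: subset_trans sP (subsetUl _ _).
exact: subset_trans sN (subsetUr _ _).
Qed.

Lemma setmax_combined_eq :
  ole (setmax P1 f) (setmax P f) -> ole (setmax P2 f) (setmax P f) ->
  setmax P f = emax (setmax P1 f) (setmax P2 f).
Proof.
move=> le1 le2; apply: ole_anti; rewrite ole_emax le1 le2 !andbT -setmaxU.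
by case: hs => sP _ _ _; apply: setmax_subset.
Qed.

(* A reaction of P2 cancelled by N1 is dominated by max N1 = max P1. *)
Lemma setmax_le_balanced :
  setmax N1 f = setmax P1 f -> ole (setmax P1 f) (setmax P f) ->
  ole (setmax P2 f) (setmax P f).
Proof.
move=> B1 le1; apply/setmax_leP => k kP2; case: hs => _ _ /subUsetP[_ sP2] _.
case kN1: (k \in N1); last by apply/le_setmax/(subsetP sP2); rewrite inE kN1.
by rewrite -B1 in le1; apply: ole_trans (le_setmax f kN1) le1.
Qed.

Lemma setmax_dominant :
  setmax N1 f = setmax P1 f ->
  ~~ ole (setmax (P1 :|: N1) f) (setmax (P2 :|: N2) f) ->
  setmax P f = setmax (P1 :|: N1) f.
Proof.
move=> B1 not_le12; apply: ole_anti; apply/andP; split.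
  apply: ole_trans (setmax_subset f (subsetUl P N)) _.
  by apply: ole_trans setmax_combined_le _; rewrite ole_emax ole_refl ole_gtW.
rewrite setmaxU B1 emaxxx; case E: (setmax P1 f) => [m|] //.
have [k kP1 fk] := setmax_attained E; subst m.
have kN2 : k \notin N2.
  apply: contra not_le12 => kN2; rewrite setmaxU B1 emaxxx E.
  by apply: le_setmax; rewrite inE kN2 orbT.
case: hs => _ _ /subUsetP[sP1 _] _.
by apply: le_setmax; apply: (subsetP sP1); rewrite inE kN2.
Qed.

End CombinedSigns.

Lemma balance_combined_dominant (R : realFieldType) (T : finType) (f : T -> R)
    (P1 N1 P2 N2 P N : {set T}) :
  combined_signs P1 N1 P2 N2 P N -> setmax N1 f = setmax P1 f ->
  ~~ ole (setmax (P1 :|: N1) f) (setmax (P2 :|: N2) f) ->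
  setmax N f = setmax P f.
Proof.
move=> hs B1 not_le12.
have not_le12' : ~~ ole (setmax (N1 :|: P1) f) (setmax (N2 :|: P2) f).
  by rewrite setUC (setUC N2).
rewrite (setmax_dominant hs B1 not_le12).
by rewrite (setmax_dominant (combined_signsN hs) (esym B1) not_le12') setUC.
Qed.

(* Disjointness of P1 and N2 means that no reaction of P1 or of N2 cancels. *)
Lemma balance_combined_disjoint (R : realFieldType) (T : finType) (f : T -> R)
    (P1 N1 P2 N2 P N : {set T}) :
  combined_signs P1 N1 P2 N2 P N -> [disjoint P1 & N2] ->
  setmax N1 f = setmax P1 f -> setmax N2 f = setmax P2 f ->
  setmax N f = setmax P f.
Proof.
move=> hs dis B1 B2; have [_ _ /subUsetP[sP1 _] /subUsetP[_ sN2]] := hs.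
have dis' : [disjoint N2 & P1] by rewrite disjoint_sym.
rewrite (setDidPl dis) in sP1; rewrite (setDidPl dis') in sN2.
have leP1 := setmax_subset f sP1; have leN2 := setmax_subset f sN2.
have leP2 := setmax_le_balanced hs B1 leP1.
have leN1 := setmax_le_balanced (combined_signsN (combined_signsC hs)) (esym B2) leN2.
rewrite (setmax_combined_eq hs) // (setmax_combined_eq (combined_signsN hs)) //.
by rewrite B1 B2.
Qed.

Lemma timescale_mono (R : realFieldType) (s0 r0 : nat) (nu nu' : 'I_r0 -> 'I_s0 -> nat)
    (alpha : 'I_s0 -> R) (beta : 'I_r0 -> R) (theta theta' : 'I_s0 -> R) (gamma : R) :
  ole (setmax (supp theta) alpha) (setmax (supp theta') alpha) ->
  ole (setmax (Gplus nu nu' theta' :|: Gminus nu nu' theta') (rho nu alpha beta))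
      (setmax (Gplus nu nu' theta :|: Gminus nu nu' theta) (rho nu alpha beta)) ->
  timescale nu nu' alpha beta theta gamma -> timescale nu nu' alpha beta theta' gamma.
Proof.
rewrite /timescale.
case: (setmax (supp theta) alpha) => [a|]; case: (setmax (supp theta') alpha) => [a'|] //;
  case: (setmax (Gplus nu nu' theta' :|: _) _) => [m'|] //;
  case: (setmax (Gplus nu nu' theta :|: _) _) => [m|] //= le_a le_m ts.
exact: le_trans ts (lerB le_a le_m).
Qed.

Section CombinationSign.
Variables (R : realFieldType) (c1 c2 : R).
Hypotheses (hc1 : 0 < c1) (hc2 : 0 < c2).

Lemma comb_gt0 (a b : R) : 0 < a -> 0 <= b -> 0 < c1 * a + c2 * b.
Proof.
by move=> ha hb; apply: ltr_wpDr; [apply: mulr_ge0 (ltW hc2) hb | apply: mulr_gt0].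
Qed.

Lemma comb_gt0P (a b : R) : 0 < c1 * a + c2 * b -> (0 < a) || (0 < b).
Proof.
apply: contraLR; rewrite negb_or -!leNgt => /andP[ha hb].
by rewrite -(addr0 0) lerD // pmulr_rle0.
Qed.

Lemma comb_lt0 (a b : R) : a < 0 -> b <= 0 -> c1 * a + c2 * b < 0.
Proof. by move=> ha hb; rewrite -oppr_gt0 opprD -!mulrN comb_gt0 ?oppr_gt0 ?oppr_ge0. Qed.

Lemma comb_lt0P (a b : R) : c1 * a + c2 * b < 0 -> (a < 0) || (b < 0).
Proof. by rewrite -oppr_gt0 opprD -!mulrN -!oppr_gt0 => /comb_gt0P. Qed.

End CombinationSign.

Section PositiveCombination.
Variables (R : realFieldType) (s0 r0 : nat) (nu nu' : 'I_r0 -> 'I_s0 -> nat).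
Variables (alpha : 'I_s0 -> R) (beta : 'I_r0 -> R) (gamma c1 c2 : R).
Variables (theta1 theta2 theta : 'I_s0 -> R).
Hypotheses (hc1 : 0 < c1) (hc2 : 0 < c2) (h2 : forall i, 0 <= theta2 i).
Hypothesis htheta : forall i, theta i = c1 * theta1 i + c2 * theta2 i.

Local Notation P := (Gplus nu nu').
Local Notation N := (Gminus nu nu').
Local Notation rate := (rho nu alpha beta).

Lemma tz_comb k : tz nu nu' theta k = c1 * tz nu nu' theta1 k + c2 * tz nu nu' theta2 k.
Proof.
rewrite /tz !mulr_sumr -big_split; apply: eq_bigr => i _.
by rewrite htheta mulrDl !mulrA.
Qed.

Lemma combined_signs_comb :
  combined_signs (P theta1) (N theta1) (P theta2) (N theta2) (P theta) (N theta).
Proof.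
split; apply/subsetP => k; rewrite !inE tz_comb.
- exact: comb_gt0P.
- exact: comb_lt0P.
- case/orP=> /andP[]; rewrite -leNgt => b_ge0 a_gt0; first exact: comb_gt0.
  by rewrite addrC; apply: comb_gt0.
- case/orP=> /andP[]; rewrite -leNgt => b_le0 a_lt0; first exact: comb_lt0.
  by rewrite addrC; apply: comb_lt0.
Qed.

Lemma supp_comb : supp theta1 \subset supp theta.
Proof.
apply/subsetP => i; rewrite !inE htheta => th1_gt0.
exact (comb_gt0 hc1 hc2 th1_gt0 (h2 i)).
Qed.

Lemma timescale_comb_dominant :
  timescale nu nu' alpha beta theta1 gamma ->
  ole (setmax (P theta2 :|: N theta2) rate) (setmax (P theta1 :|: N theta1) rate) ->
  timescale nu nu' alpha beta theta gamma.
Proof.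
move=> ts le21; apply: timescale_mono ts; first exact: setmax_subset supp_comb.
apply: ole_trans (setmax_combined_le rate combined_signs_comb) _.
by rewrite ole_emax ole_refl.
Qed.

Lemma cond32_comb_dominant :
  cond32 nu nu' alpha beta theta1 gamma ->
  ~~ ole (setmax (P theta1 :|: N theta1) rate) (setmax (P theta2 :|: N theta2) rate) ->
  cond32 nu nu' alpha beta theta gamma.
Proof.
move=> [B1|ts] not_le12.
  by left; apply: balance_combined_dominant combined_signs_comb B1 not_le12.
by right; apply: timescale_comb_dominant ts (ole_gtW not_le12).
Qed.

Lemma balance_comb_disjoint :
  P theta1 :&: N theta2 = set0 ->
  balance nu nu' alpha beta theta1 -> balance nu nu' alpha beta theta2 ->
  balance nu nu' alpha beta theta.
Proof.
by move=> dis; apply: balance_combined_disjoint combined_signs_comb _; rewrite -setI_eq0 dis.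
Qed.

End PositiveCombination.

Theorem lemma3p8 (R : realFieldType) (s0 r0 : nat)
  (hs0 : (0 < s0)%N) (hr0 : (0 < r0)%N)
  (nu nu' : 'I_r0 -> 'I_s0 -> nat)
  (alpha : 'I_s0 -> R) (halpha : forall i, 0 <= alpha i)
  (beta : 'I_r0 -> R)
  (gamma : R) (theta1 theta2 : 'I_s0 -> R)
  (h1 : forall i, 0 <= theta1 i) (h2 : forall i, 0 <= theta2 i)
  (hG : Gplus nu nu' theta1 :&: Gminus nu nu' theta2 = set0 \/
        Gminus nu nu' theta1 :&: Gplus nu nu' theta2 = set0)
  (c1 c2 : R) (hc1 : 0 < c1) (hc2 : 0 < c2) :
  let theta := fun i => c1 * theta1 i + c2 * theta2 i in
  (cond32 nu nu' alpha beta theta1 gamma ->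
   cond32 nu nu' alpha beta theta2 gamma ->
   cond32 nu nu' alpha beta theta gamma)
  /\
  (balance nu nu' alpha beta theta1 ->
   balance nu nu' alpha beta theta2 ->
   balance nu nu' alpha beta theta).
Proof.
move=> theta.
have htheta i : theta i = c1 * theta1 i + c2 * theta2 i by [].
have htheta' i : theta i = c2 * theta2 i + c1 * theta1 i by rewrite addrC.
have balance_theta : balance nu nu' alpha beta theta1 -> balance nu nu' alpha beta theta2 ->
    balance nu nu' alpha beta theta.
  case: hG => dis B1 B2; first exact: balance_comb_disjoint hc1 hc2 htheta dis B1 B2.
  by apply: balance_comb_disjoint hc2 hc1 htheta' _ B2 B1; rewrite setIC.
split=> // C1 C2.
set m1 := setmax (Gplus nu nu' theta1 :|: Gminus nu nu' theta1) (rho nu alpha beta).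
set m2 := setmax (Gplus nu nu' theta2 :|: Gminus nu nu' theta2) (rho nu alpha beta).
have [le12|] := boolP (ole m1 m2); last exact: cond32_comb_dominant hc1 hc2 h2 htheta C1.
have [le21|] := boolP (ole m2 m1); last exact: cond32_comb_dominant hc2 hc1 h1 htheta' C2.
case: C1 => [B1|ts1]; last by right; apply: timescale_comb_dominant hc1 hc2 h2 htheta ts1 le21.
case: C2 => [B2|ts2]; last by right; apply: timescale_comb_dominant hc2 hc1 h1 htheta' ts2 le12.
by left; apply: balance_theta.
Qed.
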